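(* Let $\Delta\ge 1$ and $0\le\lambda<1$. Let $T$ be a rooted tree with $n$ vertices and $\Delta(T)\le\Delta$. Then there is a subtree $Q$ of $T$ containing the root with $|Q|\in[(1-2\lambda)n,\,(1-\lambda)n+2\Delta]$ such that $T\setminus Q$ has at most $\Delta$ connected components, each of order at most $\lambda n$.
   Context: For graphs $T\supseteq Q$, $T\setminus Q$ denotes the graph with edge set $E(T)\setminus E(Q)$ and isolated vertices deleted. $|Q|$ is the number of vertices of $Q$; $\Delta(T)$ is the maximum degree. *)

From mathcomp Require Import all_boot all_order all_algebra.
From mathcomp Require Export reals.
Set Implicit Arguments. Unset Strict Implicit. Unset Printing Implicit Defensive.

Definition simple_graph (V : finType) (adj : rel V) : Prop :=
  symmetric adj /\ irreflexive adj.

Definition acyclic (V : finType) (adj : rel V) : Prop :=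
  forall (x : V) (p : seq V),
    path adj x p -> uniq (x :: p) -> 2 <= size p -> ~~ adj (last x p) x.

Definition is_tree (V : finType) (adj : rel V) : Prop :=
  simple_graph adj /\ (0 < #|V|) /\ (forall x y : V, connect adj x y) /\ acyclic adj.

Definition maxdeg_le (V : finType) (adj : rel V) (D : nat) : Prop :=
  forall x : V, #|[set y | adj x y]| <= D.

Definition induced (V : finType) (adj : rel V) (S : {set V}) : rel V :=
  [rel x y | [&& adj x y, x \in S & y \in S]].

(* S spans a subtree of T: S nonempty and T[S] connected.
   (A subgraph of a tree that is a tree on vertex set S is exactly T[S].) *)
Definition subtree_set (V : finType) (adj : rel V) (S : {set V}) : Prop :=
  S != set0 /\ {in S &, forall x y, connect (induced adj S) x y}.

(* T \ Q : edges of T not in Q = T[S]; vertex set = non-isolated vertices. *)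
Definition diff_adj (V : finType) (adj : rel V) (S : {set V}) : rel V :=
  [rel x y | adj x y && ~~ ((x \in S) && (y \in S))].

Definition diff_verts (V : finType) (adj : rel V) (S : {set V}) : {set V} :=
  [set x | [exists y, diff_adj adj S x y]].

Definition diff_comp (V : finType) (adj : rel V) (S : {set V}) (x : V) : {set V} :=
  [set y | connect (diff_adj adj S) x y].

Definition diff_comps (V : finType) (adj : rel V) (S : {set V}) : {set {set V}} :=
  [set diff_comp adj S x | x in diff_verts adj S].

From mathcomp Require Import all_boot all_order all_algebra.
From mathcomp Require Import reals lra.
Import Order.TTheory GRing.Theory Num.Theory.
Set Implicit Arguments. Unset Strict Implicit. Unset Printing Implicit Defensive.

(* Hang T from the root and let [below x] be the subtree of x.  Take v with
   |below v| > λn minimal; then every child c of v has |below c| <= λn.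
   Cut off the strict subtrees of the children c_1, c_2, ... of v one at a
   time: each cut removes at most λn vertices, and cutting all of them removes
   at least |below v| - 1 - Δ > λn - 2Δ.  Stopping at the first j for which at
   least λn - 2Δ vertices are gone, at most 2λn are gone.  The remaining tree Q
   contains the root and every c_i, so each component of T \ Q lies in one of
   the subtrees below c_1, ..., c_j: at most Δ components, each of order at
   most λn. *)

Section Connect.
Variable V : finType.
Implicit Types (e : rel V) (P : {set V}).

Lemma connect_stable e (X : {pred V}) x y :
  (forall u w, u \in X -> e u w -> w \in X) -> connect e x y -> x \in X -> y \in X.
Proof.
move=> X_closed /connectP [p + ->]; elim: p x => [|z p IHp] x //= /andP [exz pz] Xx.
exact: IHp pz (X_closed _ _ Xx exz).
Qed.

Lemma connect_exit e P x y :
  connect e x y -> x \in P -> y \notin P ->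
  exists a b, [/\ connect (induced e P) x a, a \in P, b \notin P & e a b].
Proof.
move=> /connectP [p + ->]; elim: p x => [|z p IHp] x /=; first by move=> _ ->.
move=> /andP [exz pz] xP lastP; case zP: (z \in P); last by exists x, z; rewrite zP.
have [a [b [za aP bP eab]]] := IHp z pz zP lastP.
exists a, b; split=> //; apply: connect_trans za; apply: connect1.
by rewrite /induced /= exz xP zP.
Qed.

Lemma induced_sym e P : symmetric e -> symmetric (induced e P).
Proof. by move=> e_sym x y; rewrite /induced /= e_sym (andbC (x \in P)). Qed.

Lemma diff_adj_sym e P : symmetric e -> symmetric (diff_adj e P).
Proof. by move=> e_sym x y; rewrite /diff_adj /= e_sym (andbC (x \in P)). Qed.

Lemma connect_induced_in e P x y : connect (induced e P) x y -> x \in P -> y \in P.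
Proof. by apply: connect_stable => u w _ /and3P []. Qed.

Lemma path_induced_all e P x p : path (induced e P) x p -> all (mem P) p.
Proof.
by elim: p x => [|z p IHp] x //= /andP [/and3P [_ _ ->] /IHp].
Qed.

Lemma connect_class_eq e x y : symmetric e -> connect e x y ->
  [set z | connect e y z] = [set z | connect e x z].
Proof.
move=> e_sym xy; apply/setP => z; rewrite !inE; apply/idP/idP; first exact: connect_trans.
by apply: connect_trans; rewrite (sym_connect_sym e_sym).
Qed.

End Connect.

Section RootedTree.
Variables (V : finType) (adj : rel V) (root : V).
Hypothesis adj_tree : is_tree adj.
Let adj_sym : symmetric adj. Proof. by case: adj_tree => [[]]. Qed.
Let adj_irr : irreflexive adj. Proof. by case: adj_tree => [[]]. Qed.
Let adj_conn : forall x y, connect adj x y. Proof. by case: adj_tree => _ [_ []]. Qed.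
Let adj_acyc : acyclic adj. Proof. by case: adj_tree => _ [_ []]. Qed.

Implicit Types (B : {set V}).

(* [above x] is what stays joined to the root once x is deleted, so [below x]
   is the subtree of x; note that [above root] is empty. *)
Definition above x : {set V} :=
  [set y | (y != x) && connect (induced adj (~: [set x])) root y].
Definition below x : {set V} := ~: above x.
Definition children v : {set V} := [set c | adj v c & c \in below v].
(* Delete everything strictly below each c in B, keeping c itself. *)
Definition prune B : {set V} := \bigcap_(c in B) (c |: above c).

Lemma in_below x y : (y \in below x) = (y \notin above x).
Proof. exact: in_setC. Qed.

Lemma notin_above x : x \notin above x.
Proof. by rewrite inE eqxx. Qed.

Lemma above_adj c a b : a \in above c -> adj a b -> b != c -> b \in above c.
Proof.
rewrite !inE => /andP [ac root_a] ab bc; rewrite bc; apply: connect_trans root_a _.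
by apply: connect1; rewrite /induced /= ab !inE ac bc.
Qed.

Lemma root_above c : c != root -> root \in above c.
Proof. by rewrite inE eq_sym => ->; exact: connect0. Qed.

Lemma above_root : above root = set0.
Proof.
apply/setP => y; rewrite !inE; apply/negbTE/andP => -[/negP yr root_y]; apply: yr.
apply: (connect_stable (X := pred1 root)) root_y (eqxx root) => u w /eqP -> /and3P [_].
by rewrite !inE eqxx.
Qed.

Lemma below_root : below root = setT.
Proof. by rewrite /below above_root setC0. Qed.

Lemma parent_above v c : c \in children v -> v \in above c.
Proof.
rewrite inE in_below => /andP [vc c_below].
have vc_neq : v != c by apply: contraTneq vc => ->; rewrite adj_irr.
have [v_root | vr] := eqVneq v root; first by rewrite v_root root_above // -v_root eq_sym.
have [a [b [root_a a_above b_below ab]]] :=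
  connect_exit (adj_conn root v) (root_above vr) (notin_above v).
have b_v : b = v by apply: contraNeq b_below => /(above_adj a_above ab).
subst b.
have ac : a != c by apply: contraTneq a_above => ->.
rewrite inE vc_neq /=; apply: (connect_trans _ (connect1 (_ : induced _ _ a v))); last first.
  by rewrite /induced /= ab !inE ac vc_neq.
apply: connect_sub root_a => x y /and3P [xy x_above y_above]; apply: connect1.
by rewrite /induced /= xy !inE /=; apply/andP; split; apply: contraNneq c_below => <-.
Qed.

Lemma neighbours_connect_avoid_eq c z w :
  adj c z -> adj c w -> connect (induced adj (~: [set c])) z w -> z = w.
Proof.
move=> cz cw /connectP [p zp w_last]; case: (shortenP zp) w_last.
move=> [//|y q] zq uq _ w_last; subst w; exfalso.
have c_notin : c \notin [:: z, y & q].
  rewrite in_cons eq_sym (negbTE (contraTneq _ cz)) => [|->]; last by rewrite adj_irr.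
  by apply/negP => /(allP (path_induced_all zq)); rewrite !inE eqxx.
have zyq : path adj c [:: z, y & q] by rewrite /= cz; apply: sub_path zq => a b /and3P [].
have c_zyq_uniq : uniq [:: c, z, y & q] by rewrite cons_uniq c_notin uq.
have /negP [] := adj_acyc zyq c_zyq_uniq isT.
by rewrite /= adj_sym.
Qed.

Lemma adj_above_child v c z : c \in children v -> adj c z -> z \in above c -> z = v.
Proof.
move=> c_child cz z_above; have v_above := parent_above c_child.
move: c_child; rewrite inE => /andP [vc _].
apply: (neighbours_connect_avoid_eq cz); first by rewrite adj_sym.
move: z_above v_above; rewrite !inE => /andP [_ root_z] /andP [_ root_v].
by apply: connect_trans root_v; rewrite (sym_connect_sym (induced_sym _ adj_sym)).
Qed.

Lemma below_child v c : c \in children v -> below c \subset below v.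
Proof.
move=> c_child; have v_above := parent_above c_child.
move: (c_child); rewrite inE in_below => /andP [vc c_below]; rewrite setCS.
apply/subsetP => y; have [-> | vr] := eqVneq v root; first by rewrite above_root inE.
have cr : c != root by apply: contraNneq c_below => ->; exact: root_above.
rewrite inE => /andP [yv root_y].
apply: connect_stable root_y (root_above cr) => u w u_above /and3P [uw u_nv w_nv].
apply: (above_adj u_above uw); apply/eqP => wc; subst w.
by move: u_nv; rewrite (adj_above_child c_child _ u_above) ?inE ?eqxx // adj_sym.
Qed.

Lemma card_below_child v c : c \in children v -> #|below c| < #|below v|.
Proof.
move=> c_child; apply/proper_card/properP; split; first exact: below_child.
by exists v; rewrite !in_below ?notin_above // negbK parent_above.
Qed.

Lemma exists_lowest_below (P : pred nat) : P #|V| ->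
  exists2 v, P #|below v| & forall c, c \in children v -> ~~ P #|below c|.
Proof.
move=> PV; pose Q m := [exists x, (#|below x| == m) && P m].
have [|m /existsP [v /andP [/eqP <- Pv]] min_m] := ex_minnP (P := Q).
  by exists #|V|; apply/existsP; exists root; rewrite below_root cardsT eqxx PV.
exists v => // c /card_below_child; apply: contraTN => Pc; rewrite -leqNgt.
by apply: min_m; apply/existsP; exists c; rewrite eqxx.
Qed.

Lemma setC_prune B : ~: prune B = \bigcup_(c in B) (below c :\ c).
Proof. by rewrite setC_bigcap; apply: eq_bigr => c _; rewrite setCU setDE setIC. Qed.

Lemma prune_memPn B y : reflect (exists2 c, c \in B & y \in below c :\ c) (y \notin prune B).
Proof. by rewrite -in_setC setC_prune; apply: bigcupP. Qed.

Lemma prune0 : prune set0 = setT.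
Proof. by rewrite /prune big_set0. Qed.

Lemma card_prune_setU1 B c : #|~: prune (c |: B)| <= #|~: prune B| + #|below c|.
Proof.
rewrite !setC_prune bigcup_setU big_set1 setUC.
by apply: leq_trans (leq_card_setU _ _).1 _; rewrite leq_add2l subset_leq_card ?subD1set.
Qed.

Lemma root_prune B : root \in prune B.
Proof.
apply/bigcapP => c _; rewrite in_setU1; have [//|cr] := eqVneq root c.
by rewrite root_above // eq_sym.
Qed.

Lemma prune_exit B a b : a \in prune B -> b \notin prune B -> adj a b ->
  a \in B /\ b \in below a :\ a.
Proof.
move=> /bigcapP a_prune /prune_memPn [c cB b_below] ab.
move: (a_prune c cB) (b_below); rewrite in_setU1 in_setD1 in_below.
case/orP => [/eqP -> | a_above] /andP [bc b_nabove]; first by split.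
by rewrite (above_adj a_above ab bc) in b_nabove.
Qed.

Lemma connect_prune_root B y : y \in prune B -> connect (induced adj (prune B)) root y.
Proof.
(* Otherwise a walk from y to the root enters the reached part by an edge a b
   with b in B and a strictly below b; but the walk from y to a avoids b, so a
   lies above b, as y does. *)
move=> y_prune; set P := [set z | connect (induced adj (prune B)) root z].
apply/idPn => y_unreached.
have yP : y \in ~: P by rewrite !inE.
have rootP : root \notin ~: P by rewrite !inE negbK connect0.
have [a [b [ya a_unreached root_b ab]]] := connect_exit (adj_conn y root) yP rootP.
move: a_unreached root_b; rewrite !inE negbK => a_unreached root_b.
have b_prune := connect_induced_in root_b (root_prune B).
have a_nprune : a \notin prune B.
  apply: contra a_unreached => a_prune.
  by apply: connect_trans root_b (connect1 _); rewrite /induced /= adj_sym ab b_prune.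
have ba : adj b a by rewrite adj_sym.
have [bB] := prune_exit b_prune a_nprune ba; rewrite in_setD1 in_below => /andP [_ /negP].
apply; apply: (connect_stable (X := above b)) ya _ => [u w u_above /and3P [uw _] |].
  move=> w_unreached; apply: above_adj u_above uw _.
  by apply: contraTneq w_unreached => ->; rewrite !inE negbK.
move/bigcapP/(_ b bB): y_prune; rewrite in_setU1 => /orP [/eqP yb | //].
by rewrite yb root_b in y_unreached.
Qed.

Lemma prune_subtree B : subtree_set adj (prune B).
Proof.
split; first by apply/set0Pn; exists root; exact: root_prune.
move=> x y x_prune y_prune; apply: connect_trans (connect_prune_root y_prune).
by rewrite (sym_connect_sym (induced_sym _ adj_sym)) connect_prune_root.
Qed.

Lemma connect_diff_prune B u : u \notin prune B ->
  exists2 c, c \in B & connect (diff_adj adj (prune B)) c u.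
Proof.
move=> u_nprune; have u_out : u \in ~: prune B by rewrite inE.
have root_in : root \notin ~: prune B by rewrite inE negbK root_prune.
have [a [b [ua a_out b_in ab]]] := connect_exit (adj_conn u root) u_out root_in.
move: a_out b_in; rewrite !in_setC negbK => a_nprune b_prune.
have ba : adj b a by rewrite adj_sym.
have [bB _] := prune_exit b_prune a_nprune ba.
exists b => //; rewrite (sym_connect_sym (diff_adj_sym _ adj_sym)).
apply: connect_trans (connect1 (_ : diff_adj adj (prune B) a b)); last first.
  by rewrite /diff_adj /= ab (negbTE a_nprune).
apply: connect_sub ua => x y /and3P [xy x_out _]; apply: connect1.
by move: x_out; rewrite /diff_adj /= xy inE => /negbTE ->.
Qed.

Lemma diff_comps_prune B :
  diff_comps adj (prune B) \subset [set diff_comp adj (prune B) c | c in B].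
Proof.
apply/subsetP => _ /imsetP [x /[!inE] /existsP [y xy] ->].
have [c cB cx] : exists2 c, c \in B & connect (diff_adj adj (prune B)) c x.
  case x_prune: (x \in prune B); last exact: connect_diff_prune (negbT x_prune).
  have y_nprune : y \notin prune B by move: xy; rewrite /diff_adj /= x_prune => /andP [].
  have [c cB cy] := connect_diff_prune y_nprune; exists c => //.
  by apply: connect_trans cy (connect1 _); rewrite diff_adj_sym.
by apply/imsetP; exists c => //; apply: connect_class_eq => //; apply: diff_adj_sym.
Qed.

Lemma card_diff_comps_prune B : #|diff_comps adj (prune B)| <= #|B|.
Proof. exact: leq_trans (subset_leq_card (diff_comps_prune B)) (leq_imset_card _ _). Qed.

Lemma diff_comp_prune_below v B c : B \subset children v -> c \in B ->
  diff_comp adj (prune B) c \subset below c.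
Proof.
move=> B_children cB; have c_child := subsetP B_children c cB.
have vc : adj v c by move: c_child; rewrite inE => /andP [].
have v_prune : v \in prune B.
  apply/bigcapP => c' /(subsetP B_children)/parent_above v_above.
  by rewrite in_setU1 v_above orbT.
have c_prune : c \in prune B.
  apply/bigcapP => c' c'B; rewrite in_setU1; have [//|cc'] := eqVneq c c'.
  by rewrite (above_adj (parent_above (subsetP B_children c' c'B)) vc) ?orbT // eq_sym.
apply/subsetP => y cy; rewrite inE in cy.
have c_below : c \in below c by rewrite in_below notin_above.
apply: (connect_stable (X := below c)) cy c_below.
move=> u w u_below /andP [uw uw_out]; rewrite in_below; apply/negP => w_above.
have [uc | uc] := eqVneq u c.
  subst u; have wv := adj_above_child c_child uw w_above; subst w.
  by rewrite c_prune v_prune in uw_out.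
by move: u_below; rewrite in_below (above_adj w_above _ uc) // adj_sym.
Qed.

Lemma below_children v : below v \subset v |: (children v :|: ~: prune (children v)).
Proof.
apply/subsetP => y y_below; rewrite in_setU1 in_setU; case: eqVneq => //= yv.
case: (boolP (y \in children v)) => //= y_nchild; rewrite in_setC; apply/prune_memPn.
pose P := below v :\ v.
have yP : y \in P by rewrite in_setD1 yv.
have vP : v \notin P by rewrite in_setD1 eqxx.
have [a [b [ya aP bP ab]]] := connect_exit (adj_conn y v) yP vP.
move: (aP); rewrite in_setD1 in_below => /andP [av a_nabove].
have bv : b = v.
  apply: contraNeq bP => bv; rewrite in_setD1 in_below bv /=.
  by apply: contraNN a_nabove => b_above; apply: above_adj b_above _ av; rewrite adj_sym.
subst b.
have a_child : a \in children v by rewrite inE adj_sym ab in_below a_nabove.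
exists a => //; rewrite in_setD1 in_below; apply/andP; split.
  by apply: contraNneq y_nchild => ->.
apply/negP => y_above.
have [a2 [b2 [_ a2_above b2_nabove /and3P [a2b2 a2P _]]]] :=
  connect_exit ya y_above (notin_above a).
have b2a : b2 = a by apply: contraNeq b2_nabove; exact: above_adj a2_above a2b2.
subst b2.
have aa2 : adj a a2 by rewrite adj_sym.
by move: a2P; rewrite (adj_above_child a_child aa2 a2_above) in_setD1 eqxx.
Qed.

Lemma card_below_children v :
  #|below v| <= 1 + #|children v| + #|~: prune (children v)|.
Proof.
apply: leq_trans (subset_leq_card (below_children v)) _.
apply: leq_trans (leq_card_setU _ _).1 _; rewrite cards1 -addnA leq_add2l.
exact: (leq_card_setU _ _).1.
Qed.

End RootedTree.

Local Open Scope ring_scope.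

Lemma first_crossing (R : realDomainType) (f : nat -> R) (t s : R) k :
  f 0%N <= t + s -> (forall j, (j < k)%N -> f j.+1 <= f j + s) -> t <= f k ->
  exists2 j, (j <= k)%N & t <= f j <= t + s.
Proof.
move=> f0 f_step tk; pose P j := (j <= k)%N && (t <= f j).
have [|[|i] /andP [jk t_fj] min_j] := ex_minnP (P := P); first by exists k; rewrite /P leqnn.
  by exists 0%N; rewrite ?t_fj.
have f_i : f i < t.
  rewrite ltNge; apply/negP => t_fi.
  by move: (min_j i); rewrite /P (ltnW jk) t_fi ltnn => /(_ isT).
exists i.+1 => //; rewrite t_fj /=; apply: le_trans (f_step i jk) _.
by rewrite lerD2r ltW.
Qed.

Section PruneChildren.
Variables (V : finType) (adj : rel V) (root : V) (R : realDomainType).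
Hypothesis adj_tree : is_tree adj.

Lemma exists_prune_between v (t s : R) :
  0 <= t + s -> (forall c, c \in children adj root v -> #|below adj root c|%:R <= s) ->
  t + 1 + #|children adj root v|%:R <= #|below adj root v|%:R ->
  exists2 B : {set V}, B \subset children adj root v & t <= #|~: prune adj root B|%:R <= t + s.
Proof.
move=> ts_ge0 light heavy.
pose cs := enum (children adj root v); pose B j := [set:: take j cs].
pose f j : R := #|~: prune adj root (B j)|%:R.
have f0 : f 0%N <= t + s by rewrite /f /B take0 set_nil prune0 setCT cards0.
have f_step j : (j < size cs)%N -> f j.+1 <= f j + s.
  move=> j_lt; set c := nth root cs j; rewrite /f.
  have -> : B j.+1 = c |: B j.
    by apply/setP => x; rewrite !inE (take_nth root j_lt) mem_rcons in_cons.
  apply: le_trans (_ : (#|~: prune adj root (B j)| + #|below adj root c|)%:R <= _).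
    by rewrite ler_nat card_prune_setU1.
  by rewrite natrD lerD2l light // -mem_enum mem_nth.
have f_last : t <= f (size cs).
  rewrite /f /B take_size set_enum.
  by have := card_below_children root adj_tree v; rewrite -(ler_nat R) !natrD; lra.
have [j _ f_j] := first_crossing f0 f_step f_last.
by exists (B j) => //; apply/subsetP => c; rewrite inE => /mem_take; rewrite mem_enum.
Qed.

End PruneChildren.

Theorem lemma7p1 (R : realType) (D : nat) (lam : R)
  (V : finType) (adj : rel V) (root : V) :
  (1 <= D)%N -> 0 <= lam -> lam < 1 ->
  is_tree adj -> maxdeg_le adj D ->
  exists S : {set V},
    [/\ subtree_set adj S /\ root \in S,
        (1 - 2 * lam) * #|V|%:R <= #|S|%:R,
        #|S|%:R <= (1 - lam) * #|V|%:R + 2 * D%:R,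
        (#|diff_comps adj S| <= D)%N &
        forall C, C \in diff_comps adj S -> #|C|%:R <= lam * #|V|%:R].
Proof.
move=> D_ge1 lam_ge0 lam_lt1 tree max_deg.
set n := #|V|; pose L := lam * n%:R.
have n_gt0 : (0 < n)%N by case: tree => _ [].
have D_ge1R : 1 <= D%:R :> R by rewrite ler1n.
have L_ge0 : 0 <= L by rewrite mulr_ge0.
have L_lt_n : L < n%:R by rewrite /L -{2}[n%:R]mul1r ltr_pM2r ?ltr0n.
have [v /= heavy_v light_children] :=
  exists_lowest_below root tree (P := fun m => L < m%:R) L_lt_n.
have card_children : (#|children adj root v| <= D)%N.
  apply: leq_trans (max_deg v).
  by apply/subset_leq_card/subsetP => c; rewrite !inE => /andP [].
have light c : c \in children adj root v -> #|below adj root c|%:R <= L.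
  by move=> /light_children; rewrite leNgt.
(* The slack 2Δ in the step bound lets the empty cut, of size 0, lie below 2λn. *)
pose t := L - 2 * D%:R; pose s := L + 2 * D%:R.
have ts_ge0 : 0 <= t + s by rewrite /t /s; lra.
have light_s c : c \in children adj root v -> #|below adj root c|%:R <= s.
  by move=> /light; rewrite /s; lra.
have heavy_t : t + 1 + #|children adj root v|%:R <= #|below adj root v|%:R.
  by move: card_children; rewrite -(ler_nat R) /t; lra.
have [B B_children /andP [B_lo B_hi]] := exists_prune_between tree ts_ge0 light_s heavy_t.
have card_prune : #|prune adj root B|%:R = n%:R - #|~: prune adj root B|%:R :> R.
  by rewrite /n -(cardsC (prune adj root B)) natrD addrK.
exists (prune adj root B); split.
- by split; [apply: prune_subtree | apply: root_prune].
- by rewrite card_prune; move: B_hi; rewrite /t /s /L; lra.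
- by rewrite card_prune; move: B_lo; rewrite /t /L; lra.
- apply: leq_trans (card_diff_comps_prune root tree B) _.
  exact: leq_trans (subset_leq_card B_children) card_children.
- move=> C /(subsetP (diff_comps_prune root tree B)) /imsetP [c cB ->].
  apply: le_trans (light c (subsetP B_children c cB)).
  by rewrite ler_nat subset_leq_card // (diff_comp_prune_below tree B_children).
Qed.
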